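(* Let $M$ be a matroid, let $S,T$ be disjoint subsets of $E(M)$, let $k:=\kappa_M(S,T)$, and let $e\in E(M)-(S\cup T)$ be such that $\kappa_{M/e}(S,T)\neq k$. If $(A,B)$ is a partition of $E(M)$ with $S\subseteq A$, $T\subseteq B$, $\lambda_M(A)=k$, $e\in A$, and $|A|$ minimum among all such partitions, then $e\in\mathrm{cl}_M(A-e)\cap\mathrm{cl}_M(B)$.
   Context: For a matroid $M$ with ground set $E$, $\lambda_M(X):=r_M(X)+r_M(E-X)-r(M)$, and for disjoint $S,T\subseteq E$, $\kappa_M(S,T):=\min\{\lambda_M(X):S\subseteq X\subseteq E-T\}$. $\mathrm{cl}_M$ denotes closure. *)

From mathcomp Require Import all_boot.
Set Implicit Arguments. Unset Strict Implicit. Unset Printing Implicit Defensive.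

(* A matroid on the finite ground set E = [set: T], given by its rank function. *)
Record matroid (T : finType) := Matroid {
  rk : {set T} -> nat;
  rk_card : forall X, rk X <= #|X|;
  rk_mono : forall X Y : {set T}, X \subset Y -> rk X <= rk Y;
  rk_submod : forall X Y : {set T}, rk (X :|: Y) + rk (X :&: Y) <= rk X + rk Y
}.

Section Conn.
Variable T : finType.

(* connectivity of X relative to ground set E with rank function r:
   r(X) + r(E - X) - r(E)  (never truncated for a matroid, by submodularity) *)
Definition lam_on (E : {set T}) (r : {set T} -> nat) (X : {set T}) : nat :=
  r X + r (E :\: X) - r E.

(* The default value r E of the
   fold is never attained below a candidate since lam X <= r E, and X = S is a
   candidate whenever S, T are disjoint subsets of E. *)
Definition kappa_on (E : {set T}) (r : {set T} -> nat) (S U : {set T}) : nat :=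
  \big[minn/r E]_(X : {set T} | (S \subset X) && (X \subset E :\: U)) lam_on E r X.

Definition lambda (M : matroid T) (X : {set T}) := lam_on [set: T] (rk M) X.
Definition kappa (M : matroid T) (S U : {set T}) := kappa_on [set: T] (rk M) S U.

Definition contr_rk (M : matroid T) (e : T) (X : {set T}) : nat :=
  rk M (e |: X) - rk M [set e].
Definition kappa_contr (M : matroid T) (e : T) (S U : {set T}) :=
  kappa_on [set~ e] (contr_rk M e) S U.

Definition cl (M : matroid T) (X : {set T}) : {set T} :=
  [set x | rk M (x |: X) == rk M X].
End Conn.

(* Since kappa_{M/e}(S,T) <= lambda_{M/e}(A - e) <= lambda_M(A) = k and the two kappas
   differ, some X with S <= X <= E - T - e has lambda_{M/e}(X) < k.  As lambda_M(X) and
   lambda_M(X + e) are at least k, this forces lambda_M(X + e) = k and e in cl(E - X - e).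
   Submodularity of lambda uncrosses A with X + e: lambda(A & (X + e)) = k, so minimality
   of |A| gives A <= X + e and hence e in cl(B).  Finally lambda(A - e) >= k = lambda(A)
   together with e in cl(B) forces r(A - e) = r(A). *)

From mathcomp Require Import all_boot zify.
Set Implicit Arguments. Unset Strict Implicit. Unset Printing Implicit Defensive.

Lemma bigmin_le (I : eqType) (s : seq I) (P : pred I) (F : I -> nat) m j :
  j \in s -> P j -> \big[minn/m]_(i <- s | P i) F i <= F j.
Proof.
elim: s => // a s IH; rewrite inE big_cons => /predU1P[->|js] Pj.
  by rewrite Pj geq_minl.
case: (P a); last exact: IH.
by rewrite (leq_trans (geq_minr _ _)) ?IH.
Qed.

Section KappaOn.
Variables (T : finType) (E : {set T}) (r : {set T} -> nat) (S U : {set T}).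

Lemma kappa_on_le (X : {set T}) :
  S \subset X -> X \subset E :\: U -> kappa_on E r S U <= lam_on E r X.
Proof.
by move=> hSX hXE; rewrite /kappa_on bigmin_le ?mem_index_enum ?hSX.
Qed.

(* The hypothesis keeps the default value [r E] of the minimum from undercutting
   every candidate. *)
Lemma kappa_on_attained :
  (forall Y, r Y <= r E) -> S \subset E :\: U ->
  exists2 X : {set T}, (S \subset X) && (X \subset E :\: U) & kappa_on E r S U = lam_on E r X.
Proof.
move=> rE hS; pose cand (X : {set T}) := (S \subset X) && (X \subset E :\: U).
have candS : cand S by rewrite /cand subxx hS.
case: (arg_minnP (lam_on E r) candS) => X candX minX.
exists X => //; apply/eqP; rewrite eqn_leq.
case/andP: candX => hSX hXE; rewrite kappa_on_le //=.
apply: (big_ind (fun m => lam_on E r X <= m)) => [||Y /minX] //.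
- have := minX S candS; have := rE S; have := rE (E :\: S); rewrite /lam_on; lia.
- by move=> m n; rewrite leq_min => -> ->.
Qed.

End KappaOn.

Section Matroid.
Variables (T : finType) (M : matroid T).
Implicit Types (S U X Y A P : {set T}) (x e : T).
Local Notation r := (rk M).

Lemma rk0 : r set0 = 0.
Proof. by apply/eqP; rewrite -leqn0 -(cards0 T) rk_card. Qed.

Lemma rk1 x : r [set x] <= 1.
Proof. by rewrite -(cards1 x) rk_card. Qed.

Lemma rk_subadd X Y : r (X :|: Y) <= r X + r Y.
Proof. exact: leq_trans (leq_addr _ _) (rk_submod M X Y). Qed.

Lemma rk_setT X : r X <= r setT.
Proof. exact/rk_mono/subsetT. Qed.

Lemma rk_setT_compl X : r setT <= r X + r (~: X).
Proof. by have := rk_submod M X (~: X); rewrite setUCr setICr rk0 addn0. Qed.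

Lemma lambdaE X : lambda M X = r X + r (~: X) - r setT.
Proof. by rewrite /lambda /lam_on setTD. Qed.

Lemma lambda_submod X Y :
  lambda M (X :&: Y) + lambda M (X :|: Y) <= lambda M X + lambda M Y.
Proof.
rewrite !lambdaE setCI setCU.
have := rk_submod M X Y; have := rk_submod M (~: X) (~: Y).
have := rk_setT_compl (X :&: Y); have := rk_setT_compl (X :|: Y).
rewrite setCI setCU; lia.
Qed.

Lemma kappa_le_lambda S U X :
  S \subset X -> [disjoint X & U] -> kappa M S U <= lambda M X.
Proof. by move=> hSX hXU; apply: kappa_on_le; rewrite // setTD -disjoints_subset. Qed.

Lemma lambda_setI_kappa S U A P :
  S \subset A -> S \subset P -> [disjoint A & U] -> [disjoint P & U] ->
  lambda M A = kappa M S U -> lambda M P = kappa M S U ->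
  lambda M (A :&: P) = kappa M S U.
Proof.
move=> hSA hSP hAU hPU hA hP.
have hSAP : S \subset A :&: P by rewrite subsetI hSA.
have := kappa_le_lambda hSAP (disjointWl (subsetIl A P) hAU).
have hAPU : [disjoint A :|: P & U].
  by rewrite disjoints_subset subUset -!disjoints_subset hAU.
have := kappa_le_lambda (subset_trans hSA (subsetUl A P)) hAPU.
have := lambda_submod A P; lia.
Qed.

Lemma cl_mono X Y x : X \subset Y -> x \in cl M X -> x \in cl M Y.
Proof.
rewrite !inE => hXY /eqP rxX; rewrite eqn_leq [r Y <= _]rk_mono ?subsetU1 // andbT.
have := rk_submod M (x |: X) Y.
rewrite -setUA (setUidPr hXY).
have : r X <= r ((x |: X) :&: Y) by rewrite rk_mono // subsetI subsetU1.
lia.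
Qed.

(* As [e] is spanned by [~: A], moving it out of [A] does not change [r (~: A)]. *)
Lemma cl_setD1 A e :
  e \in A -> e \in cl M (~: A) -> lambda M A <= lambda M (A :\ e) ->
  e \in cl M (A :\ e).
Proof.
move=> heA; rewrite !inE setD1K // => /eqP rcA.
rewrite !lambdaE setCD setUC -/(e |: ~: A) rcA eqn_leq => hlam.
apply/andP; split; last exact/rk_mono/subD1set.
have := rk_setT_compl (A :\ e); rewrite setCD setUC -/(e |: ~: A) rcA.
by have := rk_setT_compl A; lia.
Qed.

End Matroid.

Section Contraction.
Variables (T : finType) (M : matroid T) (e : T).
Implicit Types (S U X A : {set T}).
Local Notation r := (rk M).
Local Notation lambda_contr := (lam_on [set~ e] (contr_rk M e)).

Lemma lambda_contrE X :
  e \notin X -> lambda_contr X = r (e |: X) + r (~: X) - r setT - r [set e].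
Proof.
move=> heX; have eCX : e |: ([set~ e] :\: X) = ~: X.
  by apply/setP => x; rewrite !inE; case: (x =P e) => [->|] /=; rewrite ?heX ?andbT.
rewrite /lam_on /contr_rk eCX setUCr.
have := rk_submod M (e |: X) (~: X).
have -> : (e |: X) :|: ~: X = setT by rewrite -setUA setUCr setUT.
have -> : (e |: X) :&: ~: X = [set e].
  by rewrite setIUl setICr setU0; apply/setIidPl; rewrite sub1set inE.
have := rk_setT M (e |: X); have := rk_setT M (~: X).
have := rk_mono M (subsetU1 e X); lia.
Qed.

Lemma lambda_contr_setD1 A : e \in A -> lambda_contr (A :\ e) <= lambda M A.
Proof.
move=> heA; rewrite lambda_contrE ?setD11 // setD1K // setCD setUC lambdaE.
have := rk_subadd M [set e] (~: A); lia.
Qed.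

Lemma kappa_contr_le_lambda S U A :
  S \subset A -> [disjoint A & U] -> e \in A -> e \notin S ->
  kappa_contr M e S U <= lambda M A.
Proof.
move=> hSA hAU heA heS; apply: leq_trans (lambda_contr_setD1 heA).
apply: kappa_on_le; first by rewrite subsetD1 hSA.
rewrite [[set~ e] :\: U]setDE subsetI; apply/andP; split.
  by apply/subsetP => x; rewrite !inE => /andP[].
by rewrite -disjoints_subset (disjointWl (subD1set A e)).
Qed.

Lemma kappa_contr_attained S U :
  [disjoint S & U] -> e \notin S :|: U ->
  exists X, [/\ S \subset X, [disjoint X & U], e \notin X &
                kappa_contr M e S U = lambda_contr X].
Proof.
rewrite inE negb_or => hSU /andP[heS _].
have rE Y : contr_rk M e Y <= contr_rk M e [set~ e].
  by rewrite /contr_rk setUCr leq_sub2r ?rk_setT.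
have hS : S \subset [set~ e] :\: U.
  rewrite setDE subsetI -[S \subset ~: U]disjoints_subset hSU andbT.
  by apply/subsetP => x xS; rewrite !inE; apply: contraNneq heS => <-.
have [X /andP[hSX]] := kappa_on_attained rE hS.
rewrite setDE subsetI -[X \subset ~: U]disjoints_subset => /andP[hXe hXU] kX.
by exists X; split=> //; apply/negP => /(subsetP hXe); rewrite !inE eqxx.
Qed.

(* The hypotheses force [r [set e] = 1] and make both [r X <= r (e |: X)] and
   [r (~: (e |: X)) <= r (~: X)] tight. *)
Lemma lambda_contr_lt k X :
  e \notin X -> k <= lambda M X -> k <= lambda M (e |: X) -> lambda_contr X < k ->
  lambda M (e |: X) = k /\ e \in cl M (~: (e |: X)).
Proof.
move=> heX; rewrite lambda_contrE // !lambdaE => hX hP hXc.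
have eCX : e |: ~: (e |: X) = ~: X.
  by rewrite setCU setIC -setDE setD1K // inE.
rewrite inE eCX.
have := rk_mono M (subsetU1 e X); have := rk_subadd M [set e] X.
have := rk_mono M (subsetU1 e (~: (e |: X))); have := rk_subadd M [set e] (~: (e |: X)).
rewrite eCX; have := rk1 M e; have := rk_setT_compl M X; have := rk_setT_compl M (e |: X).
by move=> *; split; apply/eqP; lia.
Qed.

End Contraction.

Theorem lemma3p5 (T : finType) (M : matroid T) (S U : {set T}) (e : T)
  (hSU : [disjoint S & U])
  (he : e \notin S :|: U)
  (hcon : kappa_contr M e S U <> kappa M S U)
  (A B : {set T})
  (hpart : A :|: B = [set: T]) (hdisj : [disjoint A & B])
  (hSA : S \subset A) (hUB : U \subset B)
  (hlam : lambda M A = kappa M S U) (heA : e \in A)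
  (hmin : forall A' B' : {set T}, A' :|: B' = [set: T] -> [disjoint A' & B'] ->
     S \subset A' -> U \subset B' -> lambda M A' = kappa M S U -> e \in A' ->
     #|A| <= #|A'|) :
  e \in cl M (A :\ e) :&: cl M B.
Proof.
have hB : B = ~: A.
  apply/setP => x; move/setP/(_ x): hpart; move: hdisj; rewrite -setI_eq0.
  by move/eqP/setP/(_ x); rewrite !inE; case: (x \in A); case: (x \in B).
subst B.
have hAU : [disjoint A & U] by rewrite disjoint_sym disjoints_subset.
move: (he); rewrite inE negb_or => /andP[heS heU].
have [X [hSX hXU heX kX]] := kappa_contr_attained M hSU he.
have hXlt : lam_on [set~ e] (contr_rk M e) X < kappa M S U.
  by rewrite -kX ltn_neqAle -{2}hlam kappa_contr_le_lambda // andbT; apply/eqP.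
set P := e |: X.
have hSP : S \subset P := subset_trans hSX (subsetU1 e X).
have hPU : [disjoint P & U].
  by rewrite disjoints_subset subUset sub1set inE heU -disjoints_subset.
have [hP heclP] := lambda_contr_lt heX (kappa_le_lambda M hSX hXU)
  (kappa_le_lambda M hSP hPU) hXlt.
have hAP : A \subset P.
  have hAPk := lambda_setI_kappa hSA hSP hAU hPU hlam hP.
  have hSAP : S \subset A :&: P by rewrite subsetI hSA.
  have heAP : e \in A :&: P by rewrite inE heA setU11.
  have hcard := hmin _ _ (setUCr (A :&: P)) _ hSAP _ hAPk heAP.
  apply/setIidPl/eqP; rewrite eqEcard subsetIl hcard //.
    by rewrite disjoints_subset setCK.
  by rewrite -disjoints_subset disjoint_sym (disjointWl (subsetIl A P)).
have heclA : e \in cl M (~: A) by apply: cl_mono heclP; rewrite setCS.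
rewrite inE heclA andbT; apply: cl_setD1 => //.
by rewrite hlam (kappa_le_lambda M) ?subsetD1 ?hSA // (disjointWl (subD1set A e)).
Qed.
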